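(* Let $\mathcal{G}_{N,M}=\{G_s\}$ be the set of simple undirected networks on node set $\{1,\dots,N\}$ with exactly $M$ edges (no self-edges, no repeated edges), and let $G^{(0)}\in\mathcal{G}_{N,M}$. For $t\ge 0$ let $\mathbf{G}^{(t)}=(\mathcal{G}_{N,M},\pi^{(t)})$ be the random-network ensemble where $\pi^{(t)}_s$ is the probability that the network obtained from $G^{(0)}$ by $t$ successive independent uniform rewires equals $G_s$. Then $\lim_{t\to\infty}\mathbf{G}^{(t)}=\mathbf{G}_{N,M}$, where $\mathbf{G}_{N,M}=(\mathcal{G}_{N,M},\pi)$ is the Erdős–Rényi ensemble with $\pi_s=1/|\mathcal{G}_{N,M}|$ for all $s$.
   Context: A random-network ensemble is a pair $(\{G_s\},\pi)$ of a finite set of networks and a probability distribution $\pi$ on it. A sequence of ensembles $\mathbf{G}^{(t)}=(\{G_s\},\pi^{(t)})$ converges to $\mathbf{G}=(\{G_s\},\pi)$ iff $\pi^{(t)}\to\pi$. Uniform rewiring is the stochastic map on $\mathcal{G}_{N,M}$ taking a network with edge set $\mathcal{E}$ to the network with edge set $(\mathcal{E}\setminus\{(i,j)\})\cup\{(i',j')\}$, where $(i,j)$ is chosen uniformly at random from $\mathcal{E}$, and then $(i',j')$ is chosen uniformly at random among the $N(N-1)/2-M+1$ node pairs that are not edges of $\mathcal{E}\setminus\{(i,j)\}$ (re-selecting $(i,j)$ allowed). *)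

From HB Require Import structures.
From mathcomp Require Import all_boot all_order all_algebra.
From mathcomp Require Import all_classical all_reals all_analysis.
Set Implicit Arguments. Unset Strict Implicit. Unset Printing Implicit Defensive.
Import Order.TTheory GRing.Theory Num.Theory.
Local Open Scope ring_scope.

(* A network on nodes 'I_N (i.e. {1..N}) is given by its edge set; an edge
   (i,j) is the unordered pair {i,j}, a 2-element subset of the nodes
   (so no self-edges and no repeated edges). *)
Definition network (N : nat) := {set {set 'I_N}}.

Definition node_pairs (N : nat) : {set {set 'I_N}} :=
  [set e : {set 'I_N} | #|e| == 2%N].

Definition GNM (N M : nat) : {set network N} :=
  [set E : network N | (E \subset node_pairs N) && (#|E| == M)].

(* One-step transition probability of uniform rewiring from E to E':
   choose (i,j) uniformly from E, then (i',j') uniformly among the node pairs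
   that are not edges of E \ {(i,j)}. *)
Definition rewire_prob (R : realType) (N : nat) (E E' : network N) : R :=
  \sum_(e in E)
     \sum_(e' in node_pairs N :\: (E :\ e))
        ((E :\ e) :|: [set e'] == E')%:R
          / (#|E|%:R * #|node_pairs N :\: (E :\ e)|%:R).

Fixpoint rewire_dist (R : realType) (N : nat) (G0 : network N) (t : nat)
  : network N -> R :=
  match t with
  | 0%N => fun s => (s == G0)%:R
  | t'.+1 => fun s => \sum_(E : network N) rewire_dist R G0 t' E * rewire_prob R E s
  end.

From HB Require Import structures.
From mathcomp Require Import all_boot all_order all_algebra.
From mathcomp Require Import all_classical all_reals all_analysis.
From mathcomp Require Import ring lra zify.
Import Order.TTheory GRing.Theory Num.Theory numFieldNormedType.Exports.
Local Open Scope ring_scope.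
Local Open Scope classical_set_scope.

(* Uniform rewiring is a Markov chain on G_{N,M} whose kernel is symmetric: the
   rewire replacing e by e' is undone by the one replacing e' by e, and every
   move has probability 1/(M K) with K = N(N-1)/2 - M + 1.  The kernel is thus
   doubly stochastic and the uniform law is stationary.  Two networks of
   G_{N,M} differ in at most M edges and a single rewire can swap one of them
   (or change nothing), so the M-step kernel is bounded below by
   delta = (M K)^-M on G_{N,M}.  Doeblin's argument then shrinks the distance
   to the uniform law by the factor 1 - delta |G_{N,M}| every M steps. *)

Lemma cvg_dist_le_expr_divn (R : realType) (u : nat -> R) (l c : R) (k : nat) :
  (0 < k)%N -> 0 <= c < 1 ->
  (forall t, `|u t - l| <= c ^+ (t %/ k)) -> u @ \oo --> l.
Proof.
move=> k_gt0 /andP[c_ge0 c_lt1] u_near; apply/cvgrPdist_le => eps eps_gt0.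
have c_norm_lt1 : `|c| < 1 by rewrite ger0_norm.
have [Q _ cQ_small] := @cvgr0_norm_le _ _ _ _ _ _ (cvg_expr c_norm_lt1) _ eps_gt0.
exists (Q * k)%N => // t /= Qk_le_t; rewrite distrC.
apply: (le_trans (u_near t)); apply: le_trans (cQ_small Q (leqnn Q)).
rewrite ger0_norm ?exprn_ge0 // ler_wiXn2l // ?ltW //.
by rewrite leq_divRL.
Qed.

Fixpoint kpow {R : pzSemiRingType} {T : finType} (P : T -> T -> R) (j : nat) :
  T -> T -> R :=
  match j with
  | 0%N => fun x y => (x == y)%:R
  | j'.+1 => fun x y => \sum_z kpow P j' x z * P z y
  end.

Section DoublyStochasticChain.
Context {R : realType} {T : finType} {S : {set T}} {P : T -> T -> R}.
Hypothesis P_ge0 : forall x y, 0 <= P x y.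
Hypothesis P_notin : forall x y, x \in S -> y \notin S -> P x y = 0.
Hypothesis P_row : forall x, x \in S -> \sum_(y in S) P x y = 1.
Hypothesis P_col : forall y, y \in S -> \sum_(x in S) P x y = 1.

Lemma kpow_ge0 j x y : 0 <= kpow P j x y.
Proof.
elim: j y => [|j IH] y /=; first exact: ler0n.
by apply: sumr_ge0 => z _; apply: mulr_ge0.
Qed.

Lemma kpow_notin j x y : x \in S -> y \notin S -> kpow P j x y = 0.
Proof.
move=> xS; elim: j y => [|j IH] y yS /=.
  by case: eqP yS => // <-; rewrite xS.
apply: big1 => z _; have [zS|zS] := boolP (z \in S).
  by rewrite P_notin ?mulr0.
by rewrite IH ?mul0r.
Qed.

Lemma kpow_col j y : y \in S -> \sum_(x in S) kpow P j x y = 1.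
Proof.
elim: j y => [|j IH] y yS /=.
  by rewrite (bigD1 y) //= eqxx big1 ?addr0 // => x /andP[_ /negbTE ->].
rewrite exchange_big /= -[RHS](P_col _ yS) [RHS]big_mkcond; apply: eq_bigr => z _.
rewrite -mulr_suml; have [zS|zS] := boolP (z \in S); first by rewrite IH ?mul1r.
by rewrite big1 ?mul0r // => x xS; rewrite kpow_notin.
Qed.

Context {mu : nat -> T -> R} {x0 : T}.
Hypothesis x0S : x0 \in S.
Hypothesis mu0 : forall y, mu 0 y = (y == x0)%:R.
Hypothesis muS : forall t y, mu t.+1 y = \sum_x mu t x * P x y.

Lemma mu_notin t x : x \notin S -> mu t x = 0.
Proof.
elim: t x => [|t IH] x xS; first by rewrite mu0; case: eqP xS => // ->; rewrite x0S.
rewrite muS big1 // => z _; have [zS|zS] := boolP (z \in S).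
  by rewrite P_notin ?mulr0.
by rewrite IH ?mul0r.
Qed.

Lemma mu_ge0 t x : 0 <= mu t x.
Proof.
elim: t x => [|t IH] x; first by rewrite mu0 ler0n.
by rewrite muS; apply: sumr_ge0 => z _; apply: mulr_ge0.
Qed.

Lemma sum_mu_restrict t (f : T -> R) :
  \sum_x mu t x * f x = \sum_(x in S) mu t x * f x.
Proof.
rewrite [RHS]big_mkcond; apply: eq_bigr => x _.
by case: ifPn => // xS; rewrite mu_notin ?mul0r.
Qed.

Lemma sum_mu t : \sum_(x in S) mu t x = 1.
Proof.
elim: t => [|t IH].
  rewrite (bigD1 x0) //= mu0 eqxx big1 ?addr0 // => x /andP[_ /negbTE].
  by rewrite mu0 => ->.
under eq_bigr do rewrite muS sum_mu_restrict.
rewrite exchange_big /= -[RHS]IH; apply: eq_bigr => x xS.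
by rewrite -mulr_sumr P_row ?mulr1.
Qed.

Lemma mu_le1 t x : mu t x <= 1.
Proof.
have [xS|xS] := boolP (x \in S); last by rewrite mu_notin ?ler01.
rewrite -(sum_mu t) (bigD1 x) //= lerDl.
by apply: sumr_ge0 => *; apply: mu_ge0.
Qed.

Lemma mu_addn t j y : mu (t + j) y = \sum_(x in S) mu t x * kpow P j x y.
Proof.
elim: j y => [|j IH] y /=.
  rewrite addn0 -sum_mu_restrict (bigD1 y) //= eqxx mulr1 big1 ?addr0 // => x.
  by move/negbTE=> ->; rewrite mulr0.
rewrite addnS muS.
transitivity (\sum_z \sum_(x in S) mu t x * kpow P j x z * P z y).
  by apply: eq_bigr => z _; rewrite IH mulr_suml.
rewrite exchange_big /=; apply: eq_bigr => x _.
by rewrite mulr_sumr; apply: eq_bigr => z _; rewrite mulrA.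
Qed.

Context {k : nat} {delta : R}.
Hypothesis k_gt0 : (0 < k)%N.
Hypothesis delta_gt0 : 0 < delta.
Hypothesis kpow_ge_delta : forall x y, x \in S -> y \in S -> delta <= kpow P k x y.

Let n : R := #|S|%:R.
Let c : R := 1 - delta * n.

Let n_gt0 : 0 < n.
Proof. by rewrite ltr0n; apply/card_gt0P; exists x0. Qed.

Let c_ge0_lt1 : 0 <= c < 1.
Proof.
rewrite ltrBlDr ltrDl mulr_gt0 ?n_gt0 // andbT.
rewrite subr_ge0 -(kpow_col k _ x0S) mulr_natr -sumr_const.
by apply: ler_sum => x xS; apply: kpow_ge_delta.
Qed.

(* Both [mu t] and the columns of [kpow P k] sum to 1, so subtracting [n^-1]
   and [delta] is free; the second factor then becomes nonnegative. *)
Lemma mu_addk_centered t y : y \in S ->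
  mu (t + k) y - n^-1 =
  \sum_(x in S) (mu t x - n^-1) * (kpow P k x y - delta).
Proof.
move=> yS; rewrite mu_addn.
under [RHS]eq_bigr => x _ do rewrite mulrBr !mulrBl.
rewrite !sumrB -!mulr_suml -!mulr_sumr sum_mu kpow_col // sumr_const -mulr_natr.
have : n != 0 by rewrite gt_eqF ?n_gt0.
by rewrite /n; move: (_%:R) => m m_neq0; field.
Qed.

Lemma mu_contract t b :
  (forall x, x \in S -> `|mu t x - n^-1| <= b) ->
  forall y, y \in S -> `|mu (t + k) y - n^-1| <= c * b.
Proof.
move=> mu_near y yS; rewrite mu_addk_centered //.
have w_ge0 x : x \in S -> 0 <= kpow P k x y - delta.
  by move=> xS; rewrite subr_ge0 kpow_ge_delta.
apply: (le_trans (ler_norm_sum _ _ _)).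
apply: (@le_trans _ _ (\sum_(x in S) b * (kpow P k x y - delta))).
  apply: ler_sum => x xS; rewrite normrM (ger0_norm (w_ge0 x xS)).
  by apply: ler_wpM2r; [apply: w_ge0 | apply: mu_near].
by rewrite -mulr_sumr sumrB kpow_col // sumr_const -mulr_natr mulrC.
Qed.

Lemma mu_dist_le t y : y \in S -> `|mu t y - n^-1| <= c ^+ (t %/ k).
Proof.
rewrite {1}(divn_eq t k); move: (t %/ k)%N (t %% k)%N => q r {t}.
elim: q y => [|q IH] y yS.
  have := mu_ge0 r y; have := mu_le1 r y.
  have : 0 < n^-1 <= 1.
    by rewrite invr_gt0 invf_le1 n_gt0 // ler1n; apply/card_gt0P; exists x0.
  by rewrite mul0n add0n expr0 ler_norml; lra.
rewrite mulSnr addnAC exprS; exact: mu_contract.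
Qed.

Lemma mu_cvg y : y \in S -> (fun t => mu t y) @ \oo --> n^-1.
Proof.
move=> yS; apply: (@cvg_dist_le_expr_divn _ _ _ c k k_gt0 c_ge0_lt1) => t.
exact: mu_dist_le.
Qed.

End DoublyStochasticChain.

Definition rewire_targets {N : nat} (E : network N) (e : {set 'I_N}) :=
  node_pairs N :\: (E :\ e).

Definition rewire {N : nat} (E : network N) (e e' : {set 'I_N}) : network N :=
  E :\ e :|: [set e'].

Definition rewire_move {N : nat} (E E' : network N) (p : {set 'I_N} * {set 'I_N}) :=
  [&& p.1 \in E, p.2 \in rewire_targets E p.1 & rewire E p.1 p.2 == E'].

Section UniformRewiring.
Variables (R : realType) (N M : nat).

Let K := (#|node_pairs N| - M).+1.
Let d : R := (M * K)%:R.

Lemma GNM_sub {E : network N} : E \in GNM N M -> E \subset node_pairs N.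
Proof. by rewrite inE => /andP[]. Qed.

Lemma card_GNM {E : network N} : E \in GNM N M -> #|E| = M.
Proof. by rewrite inE => /andP[_ /eqP]. Qed.

Lemma GNM_subset_eq {E E' : network N} :
  E \in GNM N M -> E' \in GNM N M -> E' \subset E -> E' = E.
Proof.
move=> EG E'G sE'E; apply/eqP.
by rewrite eqEcard sE'E (card_GNM EG) (card_GNM E'G) leqnn.
Qed.

Lemma card_rewire_targets (E : network N) e :
  E \in GNM N M -> e \in E -> #|rewire_targets E e| = K.
Proof.
move=> EG eE; have sEp := GNM_sub EG.
rewrite cardsD (finset.setIidPr (fintype.subset_trans (subD1set E e) sEp)).
have := cardsD1 e E; have := subset_leq_card sEp.
by rewrite eE card_GNM //; lia.
Qed.

Lemma rewire_GNM (E : network N) e e' :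
  E \in GNM N M -> e \in E -> e' \in rewire_targets E e -> rewire E e e' \in GNM N M.
Proof.
move=> EG eE; rewrite inE => /andP[e'E e'p]; rewrite inE /rewire; apply/andP; split.
  rewrite finset.subUset finset.sub1set e'p andbT.
  exact: fintype.subset_trans (subD1set E e) (GNM_sub EG).
rewrite finset.setUC cardsU1 e'E; have := cardsD1 e E.
by rewrite eE card_GNM //= => ->.
Qed.

Lemma rewire_move_sym {E E' : network N} {e e'} :
  E \subset node_pairs N -> rewire_move E E' (e, e') -> rewire_move E' E (e', e).
Proof.
move=> sEp /and3P[/= eE]; rewrite inE => /andP[e'E e'p] /eqP <-.
rewrite /rewire_move /rewire_targets /rewire /= finset.setUC setU1K //.
rewrite [E :\ e :|: _]finset.setUC finset.setD1K // eqxx andbT.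
by rewrite setU11 finset.in_setD setD11 (fintype.subsetP sEp).
Qed.

Lemma rewire_prob_ge0 (E E' : network N) : 0 <= rewire_prob R E E'.
Proof.
by apply: sumr_ge0 => e _; apply: sumr_ge0 => e' _; apply: divr_ge0.
Qed.

Lemma rewire_probE (E E' : network N) : E \in GNM N M ->
  rewire_prob R E E' = d^-1 * \sum_p (rewire_move E E' p)%:R.
Proof.
move=> EG; transitivity (\sum_(e in E) \sum_(e' in rewire_targets E e)
                          d^-1 * (rewire E e e' == E')%:R).
  apply: eq_bigr => e eE; apply: eq_bigr => e' _.
  by rewrite -/(rewire_targets E e) card_rewire_targets // card_GNM // /d natrM mulrC.
rewrite pair_big_dep /= mulr_sumr big_mkcond; apply: eq_bigr => -[e e'] _ /=.
by rewrite /rewire_move /=; case: (e \in E); case: (e' \in _); rewrite ?mulr0.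
Qed.

Lemma rewire_prob_sym (E E' : network N) : E \in GNM N M -> E' \in GNM N M ->
  rewire_prob R E E' = rewire_prob R E' E.
Proof.
move=> EG E'G; rewrite !rewire_probE //; congr (_ * _).
have swap_inj : injective (fun p : {set 'I_N} * {set 'I_N} => (p.2, p.1)).
  by move=> [a b] [a' b'] [-> ->].
rewrite (reindex_inj swap_inj); apply: eq_bigr => -[e e'] _ /=.
case mv : (rewire_move E E' (e', e)); case mv' : (rewire_move E' E (e, e')) => //.
  by have := rewire_move_sym (GNM_sub EG) mv; rewrite mv'.
by have := rewire_move_sym (GNM_sub E'G) mv'; rewrite mv.
Qed.

Lemma rewire_prob_notin (E E' : network N) :
  E \in GNM N M -> E' \notin GNM N M -> rewire_prob R E E' = 0.
Proof.
move=> EG E'G; rewrite rewire_probE // big1 ?mulr0 // => -[e e'] _.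
apply/eqP; rewrite pnatr_eq0 eqb0; apply: contra E'G => /and3P[/= eE e'T /eqP <-].
exact: rewire_GNM.
Qed.

Lemma sum_rewire_move (E : network N) p : E \in GNM N M ->
  \sum_(E' in GNM N M) (rewire_move E E' p)%:R =
  ((p.1 \in E) && (p.2 \in rewire_targets E p.1))%:R :> R.
Proof.
case: p => e e' EG; rewrite /rewire_move /=.
have [/andP[eE e'T]|no_move] := boolP ((e \in E) && (e' \in rewire_targets E e)).
  rewrite (bigD1 (rewire E e e')) ?rewire_GNM //= eE e'T eqxx big1 ?addr0 //.
  by move=> F /andP[_]; rewrite eq_sym => /negbTE ->.
by rewrite big1 // => F _; rewrite andbA (negbTE no_move).
Qed.

Lemma rewire_prob_row (M_gt0 : (0 < M)%N) (E : network N) :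
  E \in GNM N M -> \sum_(E' in GNM N M) rewire_prob R E E' = 1.
Proof.
move=> EG; under eq_bigr do rewrite rewire_probE //.
rewrite -mulr_sumr exchange_big /=.
under eq_bigr do rewrite sum_rewire_move //.
transitivity (d^-1 * \sum_(e in E) \sum_(e' in rewire_targets E e) (1 : R)).
  congr (_ * _); rewrite pair_big_dep [RHS]big_mkcond.
  by apply: eq_bigr => p _; case: (_ && _).
rewrite (eq_bigr (fun _ => K%:R)) => [|e eE]; last first.
  by rewrite sumr_const card_rewire_targets.
rewrite sumr_const card_GNM // -mulrnA mulnC mulVf // pnatr_eq0 muln_eq0.
by rewrite negb_or -lt0n M_gt0.
Qed.

Lemma rewire_prob_col (M_gt0 : (0 < M)%N) (E' : network N) :
  E' \in GNM N M -> \sum_(E in GNM N M) rewire_prob R E E' = 1.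
Proof.
move=> E'G; rewrite -(rewire_prob_row M_gt0 _ E'G).
by apply: eq_bigr => E EG; apply: rewire_prob_sym.
Qed.

Lemma rewire_prob_ge_move (E E' : network N) p :
  E \in GNM N M -> rewire_move E E' p -> d^-1 <= rewire_prob R E E'.
Proof.
move=> EG mv; rewrite rewire_probE // (bigD1 p) //= mv mulrDr mulr1 lerDl.
by rewrite mulr_ge0 ?invr_ge0 // sumr_ge0.
Qed.

Lemma rewire_toward {E E' : network N} :
  (0 < M)%N -> E \in GNM N M -> E' \in GNM N M ->
  exists F, [/\ F \in GNM N M, (#|F :\: E| <= #|E' :\: E|.-1)%N
               & d^-1 <= rewire_prob R F E'].
Proof.
move=> M_gt0 EG E'G; have [sE'E|] := boolP (E' \subset E).
  have -> := GNM_subset_eq EG E'G sE'E.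
  have /card_gt0P[e eE] : (0 < #|E|)%N by rewrite card_GNM.
  exists E; split; rewrite ?finset.setDv ?cards0 //.
  apply: (@rewire_prob_ge_move _ _ (e, e)) => //.
  rewrite /rewire_move /rewire_targets /rewire /= eE finset.in_setD setD11.
  rewrite (fintype.subsetP (GNM_sub EG)) //.
  by rewrite [_ :|: _]finset.setUC finset.setD1K ?eqxx.
case/subsetPn => e' e'E' e'E.
have /subsetPn[e eE eE'] : ~~ (E \subset E').
  by apply: contra e'E => /(GNM_subset_eq E'G EG) ->.
have e_target : e \in rewire_targets E' e'.
  by rewrite finset.in_setD in_setD1 (negbTE eE') andbF (fintype.subsetP (GNM_sub EG)).
exists (rewire E' e' e); split; first exact: rewire_GNM.
  have -> : rewire E' e' e :\: E = (E' :\: E) :\ e'.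
    apply/setP => x; rewrite !inE; have [->|] := eqVneq x e.
      by rewrite eE /= andbF.
    by rewrite orbF andbCA.
  by rewrite [#|E' :\: E|](cardsD1 e') finset.in_setD e'E e'E'.
apply: (@rewire_prob_ge_move _ _ (e, e')); first exact: rewire_GNM.
apply: rewire_move_sym (GNM_sub E'G) _.
by rewrite /rewire_move /= e'E' e_target eqxx.
Qed.

Lemma kpow_rewire_ge j (E E' : network N) :
  (0 < M)%N -> E \in GNM N M -> E' \in GNM N M ->
  (#|E' :\: E| <= j)%N -> d^-1 ^+ j <= kpow (@rewire_prob R N) j E E'.
Proof.
move=> M_gt0 EG; elim: j E' => [|j IH] E' E'G dist_le.
  have : E' :\: E == finset.set0 by rewrite -cards_eq0 -leqn0.
  rewrite finset.setD_eq0 => /(GNM_subset_eq EG E'G) ->.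
  by rewrite /= eqxx expr0.
have [F [FG distF stepF]] := rewire_toward M_gt0 EG E'G.
have kpowF : d^-1 ^+ j <= kpow (@rewire_prob R N) j E F.
  by apply: IH => //; lia.
rewrite exprSr /= (bigD1 F) //=; apply: ler_wpDr.
  apply: sumr_ge0 => G _.
  by rewrite mulr_ge0 ?rewire_prob_ge0 ?(kpow_ge0 rewire_prob_ge0).
by apply: ler_pM; rewrite // ?exprn_ge0 // invr_ge0 ler0n.
Qed.

Lemma kpow_rewire_GNM_lbound : (0 < M)%N -> exists2 delta : R, 0 < delta &
  forall E E', E \in GNM N M -> E' \in GNM N M ->
    delta <= kpow (@rewire_prob R N) M E E'.
Proof.
move=> M_gt0; have d_gt0 : 0 < d by rewrite ltr0n muln_gt0 M_gt0.
exists (d^-1 ^+ M); first by rewrite exprn_gt0 ?invr_gt0.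
move=> E E' EG E'G; apply: kpow_rewire_ge => //.
by rewrite -(card_GNM E'G) subset_leq_card ?subsetDl.
Qed.

End UniformRewiring.

Theorem corollary3p4 (R : realType) (N M : nat) (G0 : network N) :
  (0 < M)%N -> G0 \in GNM N M ->
  forall s : network N, s \in GNM N M ->
    (fun t : nat => rewire_dist R G0 t s) @ \oo --> ((#|GNM N M|%:R)^-1 : R).
Proof.
move=> M_gt0 G0G s sG.
have [delta delta_gt0 kpow_ge_delta] := kpow_rewire_GNM_lbound R N M M_gt0.
apply: (mu_cvg (@rewire_prob_ge0 R N) (@rewire_prob_notin R N M)
  (rewire_prob_row R N M M_gt0) (rewire_prob_col R N M M_gt0) G0G _ _
  M_gt0 delta_gt0 kpow_ge_delta s sG) => //.
Qed.
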